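(* Let $\tau$, $K$, $X$, $Q$, $\mu_0$, $f$, $\omega$, $Z_{N,\beta,h,\omega}$, $A(b,\beta,h)$ and $\lambda(b,\beta,h)$ be as in the context. Then for all $h\in\mathbb{R}$ and $\beta\ge 0$, $$\frac1N\log \mathbb{E}Z_{N,\beta,h,\omega}\xrightarrow[N\to\infty]{} F^a(\beta,h)\ge 0,$$ where $F^a(\beta,h)$ is the (unique) solution $b>0$ of the equation $\lambda(b,\beta,h)=1$ if $\lambda(0,\beta,h)>1$, and $F^a(\beta,h)=0$ otherwise. Moreover the annealed critical point is $$h_c^a(\beta):=\sup\{h\in\mathbb{R}: F^a(\beta,h)=0\}=-\log\lambda(0,\beta,0).$$
   Context: Let $\tau=(\tau_n)_{n\ge0}$ be a discrete renewal process on $\{0,1,2,\dots\}$ with $\tau_0=0$ and i.i.d. interarrival times with law $K(n):=P(\tau_1=n)=L(n)n^{-(1+\alpha)}$ for $n\ge1$, where $\alpha\ge0$ and $L:\mathbb{N}\to(0,\infty)$ is slowly varying; assume $\sum_{n\ge1}K(n)=1$. Write $\delta_n=\mathbf 1_{\{n\in\tau\}}$ where $\{n\in\tau\}=\bigcup_{k\ge0}\{\tau_k=n\}$, and $E$ for expectation w.r.t. the law $P$ of $\tau$. For a real sequence $\omega=(\omega_n)_{n\ge0}$ independent of $\tau$, $\beta\ge0$, $h\in\mathbb{R}$, define the partition function $Z_{N,\beta,h,\omega}=E\big[\exp\big(\sum_{n=1}^N(\beta\omega_n+h)\delta_n\big)\delta_N\big]$. Let $X=(X_n)_{n\ge0}$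 be a homogeneous irreducible Markov chain on a finite state space $\Sigma$ with transition matrix $Q$, started from its invariant distribution $\mu_0$; let $f:\Sigma\to\mathbb{R}$ with $\sum_x\mu_0(x)f(x)=0$, and set $\omega_n=f(X_n)$. $\mathbb{E}$ denotes expectation with respect to the law of $X$. For $t\ge1$ define the $\Sigma\times\Sigma$ matrix $M(t,\beta,h)(x,y)=K(t)Q^t(x,y)e^{\beta f(y)+h}$, and for $b\ge0$, $A(b,\beta,h)=\sum_{t\ge1}M(t,\beta,h)e^{-bt}$ (a matrix with positive entries); $\lambda(b,\beta,h)$ denotes its Perron–Frobenius eigenvalue. *)

From Stdlib Require Import Reals List Arith ZArith.
Import ListNotations.
Open Scope R_scope.

(* States of the finite chain: Sigma = {0, ..., d-1} (as nat). *)

Fixpoint fsum (d : nat) (g : nat -> R) : R :=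
  match d with O => 0 | S d' => fsum d' g + g d' end.

Definition lsum {A : Type} (l : list A) (g : A -> R) : R :=
  fold_right (fun a s => g a + s) 0 l.
Definition lprod (l : list R) : R := fold_right Rmult 1 l.

Fixpoint mpow (d : nat) (Q : nat -> nat -> R) (n : nat) : nat -> nat -> R :=
  match n with
  | O => fun i j => if Nat.eqb i j then 1 else 0
  | S n' => fun i j => fsum d (fun k => mpow d Q n' i k * Q k j)
  end.

Definition slowly_varying (L : nat -> R) : Prop :=
  forall c : R, 0 < c ->
    Un_cv (fun n => L (Z.to_nat (Int_part (c * INR n))) / L n) 1.

Definition stochastic (d : nat) (Q : nat -> nat -> R) : Prop :=
  (forall x y, (x < d)%nat -> (y < d)%nat -> 0 <= Q x y) /\
  (forall x, (x < d)%nat -> fsum d (fun y => Q x y) = 1).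

Definition irreducible (d : nat) (Q : nat -> nat -> R) : Prop :=
  forall x y, (x < d)%nat -> (y < d)%nat -> exists n, 0 < mpow d Q n x y.

Definition invariant_distribution (d : nat) (Q : nat -> nat -> R) (mu0 : nat -> R) : Prop :=
  (forall x, (x < d)%nat -> 0 <= mu0 x) /\
  fsum d mu0 = 1 /\
  (forall y, (y < d)%nat -> fsum d (fun x => mu0 x * Q x y) = mu0 y).

(* compositions of n into positive parts = possible interarrival sequences
   (tau_1, tau_2 - tau_1, ..., tau_k - tau_{k-1}) with tau_k = n  *)
Fixpoint comps (fuel n : nat) : list (list nat) :=
  match n with
  | O => [ [] ]
  | S _ => match fuel with
           | O => []
           | S f => flat_map (fun t => map (cons t) (comps f (n - t))) (seq 1 n)
           end
  end.
Definition compositions (n : nat) : list (list nat) := comps n n.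

(* renewal epochs tau_1 < ... < tau_k from interarrival times *)
Fixpoint psums (acc : nat) (c : list nat) : list nat :=
  match c with [] => [] | t :: c' => (acc + t)%nat :: psums (acc + t) c' end.

Fixpoint paths (d n : nat) : list (list nat) :=
  match n with
  | O => [ [] ]
  | S n' => flat_map (fun i => map (cons i) (paths d n')) (seq 0 d)
  end.

Fixpoint chain_w (Q : nat -> nat -> R) (p : list nat) : R :=
  match p with
  | x :: ((y :: _) as p') => Q x y * chain_w Q p'
  | _ => 1
  end.

(* Markov chain expectation: E[G(X_0..X_N)] for X started from mu0 *)
Definition EX (d : nat) (Q : nat -> nat -> R) (mu0 : nat -> R) (N : nat)
  (G : (nat -> nat) -> R) : R :=
  lsum (paths d (S N))
    (fun p => mu0 (nth 0 p 0%nat) * chain_w Q p * G (fun n => nth n p 0%nat)).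

(* Annealed partition function  E E[ exp(sum_{n=1}^N (beta f(X_n) + h) delta_n) delta_N ]:
   expectation over the i.i.d. interarrival times (law K) on the event {N in tau},
   and over the Markov chain X (independent of tau), with omega_n = f(X_n). *)
Definition annealedZ (K : nat -> R) (d : nat) (Q : nat -> nat -> R) (mu0 f : nat -> R)
  (beta h : R) (N : nat) : R :=
  lsum (compositions N) (fun c =>
    lprod (map K c) *
    EX d Q mu0 N (fun X => exp (lsum (psums 0 c) (fun n => beta * f (X n) + h)))).

Definition A_entry (K : nat -> R) (d : nat) (Q : nat -> nat -> R) (f : nat -> R)
  (b beta h : R) (x y : nat) (a : R) : Prop :=
  infinite_sum
    (fun n => K (S n) * mpow d Q (S n) x y * exp (beta * f y + h) * exp (- b * INR (S n))) a.

(* lam is the Perron-Frobenius eigenvalue of the positive matrix A(b,beta,h):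
   the (positive) eigenvalue admitting an eigenvector with positive entries *)
Definition PF_eigenvalue (K : nat -> R) (d : nat) (Q : nat -> nat -> R) (f : nat -> R)
  (b beta h lam : R) : Prop :=
  0 < lam /\
  exists (A : nat -> nat -> R) (v : nat -> R),
    (forall x y, (x < d)%nat -> (y < d)%nat -> A_entry K d Q f b beta h x y (A x y)) /\
    (forall x, (x < d)%nat -> 0 < v x) /\
    (forall x, (x < d)%nat -> fsum d (fun y => A x y * v y) = lam * v x).

From Stdlib Require Import Reals List Arith ZArith Lra Lia ClassicalEpsilon.
Import ListNotations.
Open Scope R_scope.

(* Summing over the renewal epochs, the partition function [U_N(x)] of the chain started at
   [x] satisfies the renewal equation
     [U_N(x) = sum_(t <= N) sum_y K(t) Q^t(x,y) e^(beta f(y) + h) U_(N-t)(y)],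
   so comparing [U_N] with [e^(bN) v] shows: if every truncation of the series [A(b) v] stays
   below [v], then [U_N <= C e^(bN) v]; if some truncation dominates [v], then
   [U_N >= c e^(bN) v].  The Perron-Frobenius eigenvectors provide such [v] whenever
   [lambda(b) < 1], resp. [lambda(b) > 1].  By Collatz-Wielandt comparisons [lambda] is
   strictly decreasing in [b] and, because [sum K = 1], cannot jump across the level [1], so
   the exponential growth rate is the unique root of [lambda(b) = 1] when [lambda(0) > 1];
   otherwise it is [0], the lower bound coming from a single long renewal interval, since [K]
   decays subexponentially.  Finally [A(b, beta, h) = e^h A(b, beta, 0)] gives
   [lambda(0, beta, h) = e^h lambda(0, beta, 0)], which locates the critical point. *)

Lemma fsum_ext d g1 g2 :
  (forall i, (i < d)%nat -> g1 i = g2 i) -> fsum d g1 = fsum d g2.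
Proof.
  induction d; intros H; simpl; auto.
  rewrite IHd, H; [reflexivity | lia | intros; apply H; lia].
Qed.

Lemma fsum_plus d g1 g2 : fsum d (fun i => g1 i + g2 i) = fsum d g1 + fsum d g2.
Proof. induction d; simpl; [lra|]. rewrite IHd; lra. Qed.

Lemma fsum_scal d c g : fsum d (fun i => c * g i) = c * fsum d g.
Proof. induction d; simpl; [lra|]. rewrite IHd; lra. Qed.

Lemma fsum_const d c : fsum d (fun _ => c) = INR d * c.
Proof. induction d; simpl fsum; [simpl; lra|]. rewrite IHd, S_INR; lra. Qed.

Lemma fsum_le d g1 g2 :
  (forall i, (i < d)%nat -> g1 i <= g2 i) -> fsum d g1 <= fsum d g2.
Proof.
  induction d; simpl; intros H; [lra|].
  assert (fsum d g1 <= fsum d g2) by (apply IHd; intros; apply H; lia).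
  assert (g1 d <= g2 d) by (apply H; lia). lra.
Qed.

Lemma fsum_nonneg d g : (forall i, (i < d)%nat -> 0 <= g i) -> 0 <= fsum d g.
Proof.
  intros H. replace 0 with (INR d * 0) by ring. rewrite <- fsum_const. now apply fsum_le.
Qed.

Lemma fsum_term_le d g i :
  (forall j, (j < d)%nat -> 0 <= g j) -> (i < d)%nat -> g i <= fsum d g.
Proof.
  induction d; simpl; intros H Hi; [lia|].
  assert (0 <= fsum d g) by (apply fsum_nonneg; intros; apply H; lia).
  assert (0 <= g d) by (apply H; lia).
  destruct (Nat.eq_dec i d) as [->|Hne]; [lra|].
  assert (g i <= fsum d g) by (apply IHd; [intros; apply H|]; lia). lra.
Qed.

Lemma fsum_swap d e (g : nat -> nat -> R) :
  fsum d (fun i => fsum e (fun j => g i j)) = fsum e (fun j => fsum d (fun i => g i j)).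
Proof.
  induction d; simpl.
  - rewrite (fsum_const e 0). ring.
  - rewrite IHd, <- fsum_plus. reflexivity.
Qed.

Lemma fsum_delta_l d x a :
  (x < d)%nat -> fsum d (fun k => (if Nat.eqb x k then 1 else 0) * a k) = a x.
Proof.
  induction d; simpl; intros Hx; [lia|].
  destruct (Nat.eq_dec x d) as [->|Hne].
  - rewrite Nat.eqb_refl, (fsum_ext _ _ (fun _ => 0)), fsum_const; [ring|].
    intros i Hi. destruct (Nat.eqb_spec d i); [lia|ring].
  - rewrite IHd by lia. destruct (Nat.eqb_spec x d); [lia|ring].
Qed.

Lemma fsum_delta_r d y a :
  (y < d)%nat -> fsum d (fun k => a k * (if Nat.eqb k y then 1 else 0)) = a y.
Proof.
  intros Hy. rewrite <- (fsum_delta_l d y a Hy). apply fsum_ext; intros i _.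
  rewrite Nat.eqb_sym. ring.
Qed.

Lemma Un_cv_const c : Un_cv (fun _ => c) c.
Proof. intros e He; exists 0%nat; intros; unfold Rdist. rewrite Rminus_diag, Rabs_R0; lra. Qed.

Lemma fsum_Un_cv d (u : nat -> nat -> R) (l : nat -> R) :
  (forall i, (i < d)%nat -> Un_cv (u i) (l i)) ->
  Un_cv (fun n => fsum d (fun i => u i n)) (fsum d l).
Proof.
  induction d; simpl; intros H.
  - apply Un_cv_const.
  - apply CV_plus; [apply IHd; intros|]; apply H; lia.
Qed.

Lemma exists_argmax d (g : nat -> R) :
  (0 < d)%nat -> exists i, (i < d)%nat /\ forall j, (j < d)%nat -> g j <= g i.
Proof.
  induction d as [|d IH]; intros Hd; [lia|].
  destruct (Nat.eq_dec d 0) as [->|Hd0].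
  { exists 0%nat; split; [lia|]. intros j Hj. replace j with 0%nat by lia. lra. }
  destruct IH as [i [Hi Hmax]]; [lia|].
  destruct (Rle_dec (g d) (g i)).
  - exists i; split; [lia|]. intros j Hj.
    destruct (Nat.eq_dec j d) as [->|]; [lra|]. apply Hmax; lia.
  - exists d; split; [lia|]. intros j Hj.
    destruct (Nat.eq_dec j d) as [->|]; [lra|].
    assert (g j <= g i) by (apply Hmax; lia). lra.
Qed.

Lemma exists_argmin d (g : nat -> R) :
  (0 < d)%nat -> exists i, (i < d)%nat /\ forall j, (j < d)%nat -> g i <= g j.
Proof.
  intros Hd. destruct (exists_argmax d (fun i => - g i) Hd) as [i [Hi Hmax]].
  exists i; split; auto. intros j Hj. specialize (Hmax j Hj). lra.
Qed.

Lemma eventually_forall_fin d (P : nat -> nat -> Prop) :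
  (forall i, (i < d)%nat -> exists N, forall n, (N <= n)%nat -> P i n) ->
  exists N, forall i, (i < d)%nat -> forall n, (N <= n)%nat -> P i n.
Proof.
  induction d; intros H; [exists 0%nat; intros; lia|].
  destruct IHd as [N1 H1]; [intros; apply H; lia|].
  destruct (H d) as [N2 H2]; [lia|].
  exists (max N1 N2). intros i Hi n Hn.
  destruct (Nat.eq_dec i d) as [->|]; [apply H2 | apply H1]; lia.
Qed.

Lemma lsum_app {A} (l1 l2 : list A) g : lsum (l1 ++ l2) g = lsum l1 g + lsum l2 g.
Proof. induction l1; unfold lsum in *; simpl; [lra|]. rewrite IHl1; lra. Qed.

Lemma lsum_ext_in {A} (l : list A) g1 g2 :
  (forall a, In a l -> g1 a = g2 a) -> lsum l g1 = lsum l g2.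
Proof.
  induction l; unfold lsum in *; simpl; intros H; auto.
  rewrite H, IHl by auto. reflexivity.
Qed.

Lemma lsum_map {A B} (f : A -> B) l g : lsum (map f l) g = lsum l (fun a => g (f a)).
Proof. induction l; unfold lsum in *; simpl; auto. rewrite IHl; auto. Qed.

Lemma lsum_flat_map {A B} (f : A -> list B) l g :
  lsum (flat_map f l) g = lsum l (fun a => lsum (f a) g).
Proof. induction l; simpl; auto. rewrite lsum_app, IHl. reflexivity. Qed.

Lemma lsum_scal {A} (l : list A) c g : lsum l (fun a => c * g a) = c * lsum l g.
Proof. induction l; unfold lsum in *; simpl; [lra|]. rewrite IHl; lra. Qed.

Lemma lsum_le {A} (l : list A) g1 g2 :
  (forall a, In a l -> g1 a <= g2 a) -> lsum l g1 <= lsum l g2.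
Proof.
  induction l; unfold lsum in *; simpl; intros H; [lra|].
  assert (g1 a <= g2 a) by auto.
  assert (fold_right (fun a s => g1 a + s) 0 l <= fold_right (fun a s => g2 a + s) 0 l)
    by auto.
  lra.
Qed.

Lemma lsum_nonneg {A} (l : list A) g : (forall a, In a l -> 0 <= g a) -> 0 <= lsum l g.
Proof.
  induction l; unfold lsum in *; simpl; intros H; [lra|].
  apply Rplus_le_le_0_compat; [apply H; left | apply IHl; intros; apply H; right]; auto.
Qed.

Lemma lsum_term_le {A} (l : list A) g a :
  (forall b, In b l -> 0 <= g b) -> In a l -> g a <= lsum l g.
Proof.
  induction l as [|a' l IH]; simpl; intros H Ha; [contradiction|].
  change (g a <= g a' + lsum l g).
  assert (0 <= lsum l g) by (apply lsum_nonneg; auto).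
  assert (0 <= g a') by auto.
  destruct Ha as [<-|Ha]; [lra|]. assert (g a <= lsum l g) by auto. lra.
Qed.

Lemma lsum_fsum {A} (l : list A) d (g : A -> nat -> R) :
  lsum l (fun a => fsum d (fun i => g a i)) = fsum d (fun i => lsum l (fun a => g a i)).
Proof.
  induction l; unfold lsum in *; simpl.
  - rewrite fsum_const. ring.
  - rewrite IHl, <- fsum_plus. reflexivity.
Qed.

Lemma fsum_seq d g : fsum d g = lsum (seq 0 d) g.
Proof.
  induction d; [reflexivity|]. cbn [fsum]. rewrite seq_S, lsum_app, IHd.
  unfold lsum; simpl. lra.
Qed.

Lemma lsum_seq_sum_f_R0 s n g :
  lsum (seq s (S n)) g = sum_f_R0 (fun k => g (s + k)%nat) n.
Proof.
  induction n.
  - unfold lsum; simpl. rewrite Nat.add_0_r; lra.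
  - rewrite seq_S, lsum_app, IHn. unfold lsum; simpl. lra.
Qed.

Lemma sum_f_R0_fsum d (a : nat -> nat -> R) n :
  sum_f_R0 (fun k => fsum d (fun y => a k y)) n = fsum d (fun y => sum_f_R0 (fun k => a k y) n).
Proof. induction n; simpl; auto. rewrite IHn, <- fsum_plus. reflexivity. Qed.

Lemma lprod_map_nonneg (K : nat -> R) c :
  (forall t, In t c -> 0 <= K t) -> 0 <= lprod (map K c).
Proof.
  induction c; unfold lprod in *; simpl; intros H; [lra|].
  apply Rmult_le_pos; auto.
Qed.

Section MatrixPower.
Variable d : nat.
Variable Q : nat -> nat -> R.
Hypothesis HQ : stochastic d Q.

Lemma mpow_nonneg n x y : (y < d)%nat -> 0 <= mpow d Q n x y.
Proof.
  destruct HQ as [HQ0 _]. revert x y; induction n; intros x y Hy; simpl.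
  - destruct (Nat.eqb x y); lra.
  - apply fsum_nonneg; intros. apply Rmult_le_pos; auto.
Qed.

Lemma mpow_rowsum n x : (x < d)%nat -> fsum d (fun y => mpow d Q n x y) = 1.
Proof.
  destruct HQ as [_ HQ1]. intros Hx; induction n; simpl.
  - rewrite (fsum_ext _ _ (fun y => (if Nat.eqb x y then 1 else 0) * 1)) by (intros; ring).
    exact (fsum_delta_l d x (fun _ => 1) Hx).
  - rewrite fsum_swap, <- IHn. apply fsum_ext; intros.
    rewrite fsum_scal, HQ1 by auto. ring.
Qed.

Lemma mpow_le_1 n x y : (x < d)%nat -> (y < d)%nat -> mpow d Q n x y <= 1.
Proof.
  intros Hx Hy. rewrite <- (mpow_rowsum n x Hx).
  apply (fsum_term_le d (fun y => mpow d Q n x y)); auto.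
  intros; apply mpow_nonneg; auto.
Qed.

Lemma mpow_S_l n x y : (x < d)%nat -> (y < d)%nat ->
  mpow d Q (S n) x y = fsum d (fun k => Q x k * mpow d Q n k y).
Proof.
  intros Hx Hy. revert y Hy. induction n; intros y Hy.
  - simpl. rewrite fsum_delta_l, fsum_delta_r; auto.
  - change (mpow d Q (S (S n)) x y) with (fsum d (fun k => mpow d Q (S n) x k * Q k y)).
    rewrite (fsum_ext _ _ (fun k => fsum d (fun j => Q x j * mpow d Q n j k * Q k y))).
    + rewrite fsum_swap. apply fsum_ext; intros. simpl.
      rewrite <- fsum_scal. apply fsum_ext; intros; ring.
    + intros k Hk. rewrite IHn, Rmult_comm, <- fsum_scal by auto.
      apply fsum_ext; intros; ring.
Qed.
End MatrixPower.

Definition path_sum d Q n x (G : list nat -> R) : R :=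
  lsum (paths d n) (fun p => chain_w Q (x :: p) * G (x :: p)).

Lemma path_sum_ext d Q n x G1 G2 :
  (forall l, G1 l = G2 l) -> path_sum d Q n x G1 = path_sum d Q n x G2.
Proof. intros H; unfold path_sum; apply lsum_ext_in; intros; rewrite H; auto. Qed.

Lemma path_sum_S d Q n x G :
  path_sum d Q (S n) x G = fsum d (fun i => Q x i * path_sum d Q n i (fun l => G (x :: l))).
Proof.
  unfold path_sum. cbn [paths]. rewrite lsum_flat_map, fsum_seq.
  apply lsum_ext_in; intros i _. rewrite lsum_map, <- lsum_scal.
  apply lsum_ext_in; intros. simpl. ring.
Qed.

Lemma path_sum_markov d Q t m x phi : stochastic d Q -> (x < d)%nat ->
  path_sum d Q (t + m) x (fun l => phi (skipn t l))
  = fsum d (fun y => mpow d Q t x y * path_sum d Q m y phi).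
Proof.
  intros HQ. revert x. induction t; intros x Hx.
  - simpl. rewrite (fsum_delta_l d x (fun y => path_sum d Q m y phi)) by auto.
    apply path_sum_ext; auto.
  - change (S t + m)%nat with (S (t + m)). rewrite path_sum_S.
    rewrite (fsum_ext _ _ (fun i =>
               fsum d (fun y => Q x i * mpow d Q t i y * path_sum d Q m y phi))).
    + rewrite fsum_swap. apply fsum_ext; intros y Hy.
      rewrite mpow_S_l, Rmult_comm, <- fsum_scal by auto. apply fsum_ext; intros; ring.
    + intros i Hi.
      rewrite (fsum_ext _ _ (fun y => Q x i * (mpow d Q t i y * path_sum d Q m y phi)))
        by (intros; ring).
      rewrite fsum_scal, <- IHt by auto. reflexivity.
Qed.

Definition sumlist (c : list nat) : nat := fold_right Nat.add 0%nat c.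

Fixpoint renewal_weight d Q (g : nat -> R) (c : list nat) (x : nat) : R :=
  match c with
  | [] => 1
  | t :: c' => fsum d (fun y => mpow d Q t x y * exp (g y) * renewal_weight d Q g c' y)
  end.

Lemma nth_skipn_add t (l : list nat) n : nth n (skipn t l) 0%nat = nth (t + n) l 0%nat.
Proof. revert l; induction t; intros [|a l]; simpl; auto. destruct n; auto. Qed.

Lemma psums_shift c a : psums a c = map (Nat.add a) (psums 0 c).
Proof.
  revert a; induction c as [|t c IHc]; intros a; simpl; auto.
  f_equal. rewrite IHc, (IHc t), map_map. apply map_ext; intros; lia.
Qed.

Lemma path_sum_renewal_weight d Q g c x : stochastic d Q -> (x < d)%nat ->
  path_sum d Q (sumlist c) x (fun l => exp (lsum (psums 0 c) (fun n => g (nth n l 0%nat))))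
  = renewal_weight d Q g c x.
Proof.
  intros HQ. revert x; induction c as [|t c IH]; intros x Hx.
  - unfold path_sum, lsum; simpl. rewrite exp_0; ring.
  - cbn [sumlist fold_right renewal_weight]. fold (sumlist c).
    set (phi := fun l => exp (g (nth 0 l 0%nat) + lsum (psums 0 c) (fun n => g (nth n l 0%nat)))).
    rewrite (path_sum_ext _ _ _ _ _ (fun l => phi (skipn t l))).
    + rewrite path_sum_markov by auto. apply fsum_ext; intros y Hy.
      rewrite <- IH, Rmult_assoc by auto. f_equal.
      unfold path_sum. rewrite <- lsum_scal. apply lsum_ext_in; intros.
      unfold phi. cbn [nth]. rewrite exp_plus. ring.
    + intros l. unfold phi. cbn [psums]. rewrite Nat.add_0_l, psums_shift.
      change (lsum (t :: map (Nat.add t) (psums 0 c)) ?G)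
        with (G t + lsum (map (Nat.add t) (psums 0 c)) G).
      rewrite lsum_map, nth_skipn_add, Nat.add_0_r. do 2 f_equal.
      apply lsum_ext_in; intros. rewrite nth_skipn_add; auto.
Qed.

Lemma comps_fuel f1 : forall f2 m, (m <= f1)%nat -> (m <= f2)%nat -> comps f1 m = comps f2 m.
Proof.
  induction f1; intros f2 m H1 H2.
  - replace m with 0%nat by lia. destruct f2; reflexivity.
  - destruct m; [destruct f2; reflexivity|]. destruct f2; [lia|]. cbn [comps].
    rewrite !flat_map_concat_map. f_equal. apply map_ext_in; intros t Ht.
    apply in_seq in Ht. f_equal. apply IHf1; lia.
Qed.

Lemma in_comps fuel : forall n c, In c (comps fuel n) ->
  sumlist c = n /\ forall t, In t c -> (1 <= t)%nat.
Proof.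
  induction fuel; intros n c Hc.
  - destruct n; simpl in Hc; [destruct Hc as [<-|[]]; simpl; split; tauto|contradiction].
  - destruct n; [simpl in Hc; destruct Hc as [<-|[]]; simpl; split; tauto|].
    cbn [comps] in Hc. apply in_flat_map in Hc. destruct Hc as [t [Ht Hc]].
    apply in_map_iff in Hc. destruct Hc as [c' [<- Hc']]. apply in_seq in Ht.
    destruct (IHfuel _ _ Hc') as [Hsum Hpos]. simpl. fold (sumlist c'). split; [lia|].
    intros s [<-|Hs]; [lia|auto].
Qed.

(* [renewal_sum K d Q g N x] is the partition function of the constrained system of length
   [N] for the chain started at [x], with [g y] the reward collected at a renewal in state [y]. *)
Definition renewal_sum K d Q g N x :=
  lsum (compositions N) (fun c => lprod (map K c) * renewal_weight d Q g c x).

Lemma annealedZ_renewal_sum K d Q mu0 f beta h N : stochastic d Q ->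
  annealedZ K d Q mu0 f beta h N
  = fsum d (fun i => mu0 i * renewal_sum K d Q (fun y => beta * f y + h) N i).
Proof.
  intros HQ. unfold annealedZ, renewal_sum.
  rewrite (lsum_ext_in _ _ (fun c => fsum d (fun i => mu0 i *
     (lprod (map K c) * renewal_weight d Q (fun y => beta * f y + h) c i)))).
  - rewrite lsum_fsum. apply fsum_ext; intros. rewrite <- lsum_scal. reflexivity.
  - intros c Hc. destruct (in_comps _ _ _ Hc) as [Hsum _].
    unfold EX. cbn [paths]. rewrite lsum_flat_map, fsum_seq, <- lsum_scal.
    apply lsum_ext_in; intros i Hi. apply in_seq in Hi.
    rewrite lsum_map, <- (path_sum_renewal_weight d Q _ c i HQ) by lia.
    rewrite Hsum. unfold path_sum. rewrite <- !lsum_scal.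
    apply lsum_ext_in; intros. simpl nth. cbv beta. ring.
Qed.

Lemma renewal_sum_0 K d Q g x : renewal_sum K d Q g 0 x = 1.
Proof. unfold renewal_sum, compositions, lsum, lprod; simpl. ring. Qed.

Lemma renewal_sum_S K d Q g n x :
  renewal_sum K d Q g (S n) x
  = lsum (seq 1 (S n)) (fun t => fsum d (fun y =>
      K t * mpow d Q t x y * exp (g y) * renewal_sum K d Q g (S n - t) y)).
Proof.
  unfold renewal_sum, compositions at 1. cbn [comps]. rewrite lsum_flat_map.
  apply lsum_ext_in; intros t Ht. apply in_seq in Ht.
  rewrite lsum_map. unfold compositions. rewrite (comps_fuel n (S n - t) (S n - t)) by lia.
  rewrite (lsum_ext_in _ _ (fun c => fsum d (fun y =>
     K t * mpow d Q t x y * exp (g y) * (lprod (map K c) * renewal_weight d Q g c y)))).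
  - rewrite lsum_fsum. apply fsum_ext; intros. rewrite <- lsum_scal. reflexivity.
  - intros c _. cbn [map renewal_weight]. unfold lprod; cbn [fold_right]; fold lprod.
    rewrite <- fsum_scal. apply fsum_ext; intros; ring.
Qed.

Lemma exists_lower_bound_fin T d (phi : nat -> nat -> R) :
  (forall N x, (N < T)%nat -> (x < d)%nat -> 0 < phi N x) ->
  exists c, 0 < c /\ forall N x, (N < T)%nat -> (x < d)%nat -> c <= phi N x.
Proof.
  destruct (Nat.eq_dec d 0) as [->|Hd]; [exists 1; split; intros; lra || lia|].
  induction T as [|T IH]; intros Hphi; [exists 1; split; intros; lra || lia|].
  destruct IH as [c [Hc Hle]]; [intros; apply Hphi; lia|].
  destruct (exists_argmin d (phi T)) as [i [Hi Hmin]]; [lia|].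
  assert (0 < phi T i) by (apply Hphi; lia).
  exists (Rmin c (phi T i)); split; [now apply Rmin_pos|].
  intros N x HN Hx. destruct (Nat.eq_dec N T) as [->|].
  - eapply Rle_trans; [apply Rmin_r | auto].
  - eapply Rle_trans; [apply Rmin_l | apply Hle; lia].
Qed.

Lemma exp_le x y : x <= y -> exp x <= exp y.
Proof. intros [H|H]; [apply Rlt_le, exp_increasing; auto | subst; lra]. Qed.

Lemma exp_mul_diff b N t : (t <= N)%nat ->
  exp (b * INR (N - t)) = exp (b * INR N) * exp (- b * INR t).
Proof. intros H. rewrite minus_INR, <- exp_plus by lia. f_equal; ring. Qed.

Section RenewalBounds.
Variable K : nat -> R.
Variable d : nat.
Variable Q : nat -> nat -> R.
Variable g : nat -> R.
Hypothesis HQ : stochastic d Q.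
Hypothesis HK : forall t, (1 <= t)%nat -> 0 < K t.

Lemma kernel_nonneg t x y : (1 <= t)%nat -> (y < d)%nat ->
  0 <= K t * mpow d Q t x y * exp (g y).
Proof.
  intros Ht Hy. apply Rmult_le_pos; [|apply Rlt_le, exp_pos].
  apply Rmult_le_pos; [apply Rlt_le; auto | apply mpow_nonneg; auto].
Qed.

Lemma renewal_weight_nonneg c x : 0 <= renewal_weight d Q g c x.
Proof.
  revert x; induction c; intros x; simpl; [lra|].
  apply fsum_nonneg; intros. apply Rmult_le_pos; auto.
  apply Rmult_le_pos; [apply mpow_nonneg; auto | apply Rlt_le, exp_pos].
Qed.

Lemma renewal_sum_nonneg N x : 0 <= renewal_sum K d Q g N x.
Proof.
  apply lsum_nonneg; intros c Hc. apply Rmult_le_pos; [|apply renewal_weight_nonneg].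
  apply lprod_map_nonneg. intros t Ht. apply Rlt_le, HK.
  eapply (in_comps N); eauto.
Qed.

Lemma renewal_sum_pos N x : (x < d)%nat -> 0 < renewal_sum K d Q g N x.
Proof.
  intros Hx. destruct N as [|N]; [rewrite renewal_sum_0; lra|].
  destruct (exists_argmin d (fun y => exp (g y))) as [j [Hj Hmin]]; [lia|].
  rewrite renewal_sum_S. eapply Rlt_le_trans.
  2:{ apply (lsum_term_le _ _ (S N)); [|apply in_seq; lia].
      intros t Ht. apply in_seq in Ht. apply fsum_nonneg; intros.
      apply Rmult_le_pos; [apply kernel_nonneg; lia | apply renewal_sum_nonneg]. }
  assert (0 < K (S N)) by (apply HK; lia).
  apply Rlt_le_trans with (K (S N) * exp (g j) * fsum d (fun y => mpow d Q (S N) x y)).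
  { rewrite mpow_rowsum by auto. pose proof (exp_pos (g j)). nra. }
  rewrite <- fsum_scal. apply fsum_le; intros y Hy.
  rewrite Nat.sub_diag, renewal_sum_0.
  pose proof (mpow_nonneg d Q HQ (S N) x y Hy). pose proof (Hmin y Hy).
  apply Rmult_le_compat_r with (r := mpow d Q (S N) x y) in H1; auto.
  apply Rmult_le_compat_l with (r := K (S N)) in H1; lra.
Qed.

(* [trunc_apply b T x v] is the [x]-coordinate of [A(b) v] with the series defining [A(b)]
   truncated after [T] terms. *)
Definition trunc_apply b T x (v : nat -> R) :=
  lsum (seq 1 T) (fun t => fsum d (fun y =>
    K t * mpow d Q t x y * exp (g y) * exp (- b * INR t) * v y)).

Lemma renewal_sum_upper b v : (0 < d)%nat -> (forall x, (x < d)%nat -> 0 < v x) ->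
  (forall x T, (x < d)%nat -> trunc_apply b T x v <= v x) ->
  exists C, 0 < C /\ forall N x, (x < d)%nat ->
    renewal_sum K d Q g N x <= C * exp (b * INR N) * v x.
Proof.
  intros Hd Hv Hsuper. destruct (exists_argmin d v Hd) as [i0 [Hi0 Hmin]].
  assert (0 < v i0) by auto.
  exists (/ v i0); split; [now apply Rinv_0_lt_compat|].
  intro N. induction N as [N IH] using (well_founded_induction lt_wf). intros x Hx.
  destruct N as [|N].
  - rewrite renewal_sum_0, Rmult_0_r, exp_0, Rmult_1_r.
    apply (Rmult_le_reg_l (v i0)); auto. field_simplify; auto; lra.
  - rewrite renewal_sum_S. eapply Rle_trans.
    + apply lsum_le with (g2 := fun t => / v i0 * exp (b * INR (S N)) *
        fsum d (fun y => K t * mpow d Q t x y * exp (g y) * exp (- b * INR t) * v y)).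
      intros t Ht. apply in_seq in Ht. rewrite <- fsum_scal. apply fsum_le; intros y Hy.
      pose proof (kernel_nonneg t x y ltac:(lia) Hy).
      eapply Rle_trans; [apply Rmult_le_compat_l; [auto | apply IH; auto; lia]|].
      rewrite exp_mul_diff by lia. right; ring.
    + rewrite lsum_scal. apply Rmult_le_compat_l; [|apply Hsuper; auto].
      apply Rmult_le_pos; [apply Rlt_le, Rinv_0_lt_compat | apply Rlt_le, exp_pos]; auto.
Qed.

Lemma renewal_sum_lower b v T : (forall x, (x < d)%nat -> 0 < v x) ->
  (forall x, (x < d)%nat -> v x <= trunc_apply b T x v) ->
  exists c, 0 < c /\ forall N x, (x < d)%nat ->
    c * exp (b * INR N) * v x <= renewal_sum K d Q g N x.
Proof.
  intros Hv Hsub.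
  destruct (exists_lower_bound_fin T d
              (fun N x => renewal_sum K d Q g N x / (exp (b * INR N) * v x))) as [c [Hc Hle]].
  { intros N x _ Hx. apply Rdiv_lt_0_compat; [apply renewal_sum_pos; auto|].
    apply Rmult_lt_0_compat; [apply exp_pos | auto]. }
  exists c; split; auto.
  intro N. induction N as [N IH] using (well_founded_induction lt_wf). intros x Hx.
  assert (0 < exp (b * INR N) * v x) by (apply Rmult_lt_0_compat; [apply exp_pos | auto]).
  destruct (Nat.lt_ge_cases N T) as [HNT|HNT].
  { specialize (Hle N x HNT Hx). apply Rmult_le_compat_r with (r := exp (b * INR N) * v x) in Hle;
      [|lra].
    unfold Rdiv in Hle. rewrite Rmult_assoc, Rinv_l, Rmult_1_r in Hle by lra. lra. }
  destruct N as [|n].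
  { replace T with 0%nat in Hsub by lia. specialize (Hsub x Hx). specialize (Hv x Hx).
    unfold trunc_apply, lsum in Hsub. simpl in Hsub. lra. }
  rewrite renewal_sum_S.
  replace (seq 1 (S n)) with (seq 1 T ++ seq (1 + T) (S n - T))
    by (rewrite <- seq_app; f_equal; lia).
  rewrite lsum_app.
  assert (0 <= lsum (seq (1 + T) (S n - T)) (fun t => fsum d (fun y =>
            K t * mpow d Q t x y * exp (g y) * renewal_sum K d Q g (S n - t) y))).
  { apply lsum_nonneg; intros t Ht. apply in_seq in Ht. apply fsum_nonneg; intros.
    apply Rmult_le_pos; [apply kernel_nonneg; lia | apply renewal_sum_nonneg]. }
  enough (c * exp (b * INR (S n)) * v x <= lsum (seq 1 T) (fun t => fsum d (fun y =>
            K t * mpow d Q t x y * exp (g y) * renewal_sum K d Q g (S n - t) y))) by lra.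
  eapply Rle_trans.
  { apply Rmult_le_compat_l; [|apply Hsub; auto].
    apply Rmult_le_pos; [lra | apply Rlt_le, exp_pos]. }
  unfold trunc_apply. rewrite <- lsum_scal. apply lsum_le; intros t Ht. apply in_seq in Ht.
  rewrite <- fsum_scal. apply fsum_le; intros y Hy.
  pose proof (kernel_nonneg t x y ltac:(lia) Hy).
  eapply Rle_trans; [|apply Rmult_le_compat_l; [auto | apply IH; auto; lia]].
  rewrite exp_mul_diff by lia. right; ring.
Qed.
End RenewalBounds.

Lemma infinite_sum_nonneg a l : (forall n, 0 <= a n) -> infinite_sum a l -> 0 <= l.
Proof.
  intros Ha Hl. apply (@Rle_cv_lim (fun _ => 0) (sum_f_R0 a) 0 l); auto.
  - intros; apply cond_pos_sum; auto.
  - apply Un_cv_const.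
Qed.

Lemma sum_f_R0_le_infinite_sum a l n :
  (forall n, 0 <= a n) -> infinite_sum a l -> sum_f_R0 a n <= l.
Proof. intros Ha Hl. apply growing_ineq; auto. intro m; simpl. specialize (Ha (S m)); lra. Qed.

Lemma infinite_sum_le a b la lb :
  (forall n, a n <= b n) -> infinite_sum a la -> infinite_sum b lb -> la <= lb.
Proof.
  intros Hab Ha Hb. apply (@Rle_cv_lim (sum_f_R0 a) (sum_f_R0 b) la lb); auto.
  intros; apply sum_Rle; auto.
Qed.

Lemma infinite_sum_scal a l c : infinite_sum a l -> infinite_sum (fun n => c * a n) (c * l).
Proof.
  intros Ha. assert (H : Un_cv (fun n => c * sum_f_R0 a n) (c * l))
    by (apply CV_mult; [apply Un_cv_const | exact Ha]).
  intros e He; destruct (H e He) as [N HN]; exists N; intros n Hn.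
  rewrite (sum_eq _ (fun i => a i * c)), <- scal_sum by (intros; ring). apply HN; auto.
Qed.

Lemma infinite_sum_minus a b la lb :
  infinite_sum a la -> infinite_sum b lb -> infinite_sum (fun n => a n - b n) (la - lb).
Proof.
  intros Ha Hb. assert (H := CV_minus _ _ _ _ Ha Hb).
  intros e He; destruct (H e He) as [N HN]; exists N; intros n Hn.
  rewrite minus_sum. apply HN; auto.
Qed.

Lemma eigenvalue_le_of_supersolution d (A : nat -> nat -> R) v w lam mu : (0 < d)%nat ->
  (forall x y, (x < d)%nat -> (y < d)%nat -> 0 <= A x y) ->
  (forall x, (x < d)%nat -> 0 < v x) -> (forall x, (x < d)%nat -> 0 < w x) ->
  (forall x, (x < d)%nat -> fsum d (fun y => A x y * v y) = lam * v x) ->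
  (forall x, (x < d)%nat -> fsum d (fun y => A x y * w y) <= mu * w x) -> lam <= mu.
Proof.
  intros Hd HA Hv Hw Heig Hsuper.
  destruct (exists_argmax d (fun x => v x / w x) Hd) as [i [Hi Hmax]].
  set (s := v i / w i). assert (Hvi := Hv i Hi). assert (Hwi := Hw i Hi).
  assert (Hs0 : 0 <= s) by (apply Rlt_le, Rdiv_lt_0_compat; auto).
  assert (Hs : forall y, (y < d)%nat -> v y <= s * w y).
  { intros y Hy. assert (Hwy := Hw y Hy). specialize (Hmax y Hy).
    replace (v y) with (v y / w y * w y) by (field; lra).
    apply Rmult_le_compat_r; unfold s; lra. }
  apply Rmult_le_reg_r with (v i); auto.
  rewrite <- Heig by auto.
  apply Rle_trans with (s * fsum d (fun y => A i y * w y)).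
  - rewrite <- fsum_scal. apply fsum_le; intros y Hy.
    specialize (Hs y Hy). specialize (HA i y Hi Hy). nra.
  - replace (mu * v i) with (s * (mu * w i)) by (unfold s; field; lra).
    apply Rmult_le_compat_l; auto.
Qed.

Lemma eigenvalue_ge_of_subsolution d (A : nat -> nat -> R) v w lam rho : (0 < d)%nat ->
  (forall x y, (x < d)%nat -> (y < d)%nat -> 0 <= A x y) ->
  (forall x, (x < d)%nat -> 0 < v x) -> (forall x, (x < d)%nat -> 0 < w x) ->
  (forall x, (x < d)%nat -> fsum d (fun y => A x y * v y) = lam * v x) ->
  (forall x, (x < d)%nat -> rho * w x <= fsum d (fun y => A x y * w y)) -> rho <= lam.
Proof.
  intros Hd HA Hv Hw Heig Hsub.
  destruct (exists_argmin d (fun x => v x / w x) Hd) as [i [Hi Hmin]].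
  set (s := v i / w i). assert (Hvi := Hv i Hi). assert (Hwi := Hw i Hi).
  assert (Hs0 : 0 <= s) by (apply Rlt_le, Rdiv_lt_0_compat; auto).
  assert (Hs : forall y, (y < d)%nat -> s * w y <= v y).
  { intros y Hy. assert (Hwy := Hw y Hy). specialize (Hmin y Hy).
    replace (v y) with (v y / w y * w y) by (field; lra).
    apply Rmult_le_compat_r; unfold s; lra. }
  apply Rmult_le_reg_r with (v i); auto.
  rewrite <- Heig by auto.
  apply Rle_trans with (s * fsum d (fun y => A i y * w y)).
  - replace (rho * v i) with (s * (rho * w i)) by (unfold s; field; lra).
    apply Rmult_le_compat_l; auto.
  - rewrite <- fsum_scal. apply fsum_le; intros y Hy.
    specialize (Hs y Hy). specialize (HA i y Hi Hy). nra.
Qed.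

Lemma exp_diff_le F b t : 0 < F -> F / 2 <= b -> b <= F -> 0 <= t ->
  exp (- b * t) - exp (- F * t) <= (F - b) * (2 / F).
Proof.
  intros HF H1 H2 Ht. set (u := exp (- b * t)).
  assert (Hu : 0 < u) by apply exp_pos.
  assert (HF' : exp (- F * t) = u * exp (- ((F - b) * t)))
    by (unfold u; rewrite <- exp_plus; f_equal; ring).
  pose proof (exp_ineq1_le (- ((F - b) * t))).
  assert (Hut : u * (b * t) <= 1).
  { pose proof (exp_ineq1_le (b * t)).
    assert (u * exp (b * t) = 1) by (unfold u; rewrite <- exp_plus, <- exp_0; f_equal; ring).
    nra. }
  assert (u * t <= 2 / F).
  { apply Rmult_le_reg_l with (F / 2); [lra|].
    replace (F / 2 * (2 / F)) with 1 by (field; lra). nra. }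
  rewrite HF'. nra.
Qed.

Section Eigenvalue.
Variable K : nat -> R.
Variable d : nat.
Variable Q : nat -> nat -> R.
Variable f : nat -> R.
Variables beta h : R.
Hypothesis HQ : stochastic d Q.
Hypothesis HK : forall t, (1 <= t)%nat -> 0 < K t.
Hypothesis Hd : (0 < d)%nat.
Let g := fun y => beta * f y + h.

Definition A_term b x y n :=
  K (S n) * mpow d Q (S n) x y * exp (beta * f y + h) * exp (- b * INR (S n)).

Lemma A_term_nonneg b x y n : (y < d)%nat -> 0 <= A_term b x y n.
Proof.
  intros Hy. apply Rmult_le_pos; [|apply Rlt_le, exp_pos].
  apply (kernel_nonneg K d Q g); auto; lia.
Qed.

Lemma A_entry_nonneg b x y a : (y < d)%nat -> A_entry K d Q f b beta h x y a -> 0 <= a.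
Proof.
  intros Hy Ha. apply (infinite_sum_nonneg (A_term b x y)); auto.
  intros; apply A_term_nonneg; auto.
Qed.

Lemma trunc_apply_S b n x v :
  trunc_apply K d Q g b (S n) x v = fsum d (fun y => sum_f_R0 (A_term b x y) n * v y).
Proof.
  unfold trunc_apply. rewrite lsum_seq_sum_f_R0, sum_f_R0_fsum. apply fsum_ext; intros.
  rewrite (Rmult_comm (sum_f_R0 _ _)), scal_sum. apply sum_eq; intros.
  unfold A_term, g. replace (1 + i0)%nat with (S i0) by lia. ring.
Qed.

Lemma trunc_apply_cv b x v (A : nat -> nat -> R) :
  (forall y, (y < d)%nat -> A_entry K d Q f b beta h x y (A x y)) ->
  Un_cv (fun n => trunc_apply K d Q g b (S n) x v) (fsum d (fun y => A x y * v y)).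
Proof.
  intros HA. assert (H : Un_cv (fun n => fsum d (fun y => sum_f_R0 (A_term b x y) n * v y))
                               (fsum d (fun y => A x y * v y))).
  { apply fsum_Un_cv. intros. apply CV_mult; [apply HA; auto | apply Un_cv_const]. }
  intros e He; destruct (H e He) as [N HN]; exists N; intros. rewrite trunc_apply_S; auto.
Qed.

Lemma trunc_apply_le_A b T x v (A : nat -> nat -> R) :
  (forall y, (y < d)%nat -> 0 <= v y) ->
  (forall y, (y < d)%nat -> A_entry K d Q f b beta h x y (A x y)) ->
  trunc_apply K d Q g b T x v <= fsum d (fun y => A x y * v y).
Proof.
  intros Hv HA. destruct T as [|T].
  - unfold trunc_apply, lsum; simpl. apply fsum_nonneg; intros.
    apply Rmult_le_pos; [eapply A_entry_nonneg; eauto | auto].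
  - rewrite trunc_apply_S. apply fsum_le; intros. apply Rmult_le_compat_r; auto.
    apply sum_f_R0_le_infinite_sum; [intros; apply A_term_nonneg | apply HA]; auto.
Qed.

Lemma trunc_apply_shift b del T x v : 0 <= del -> (forall y, (y < d)%nat -> 0 <= v y) ->
  exp (- (del * INR T)) * trunc_apply K d Q g b T x v <= trunc_apply K d Q g (b + del) T x v.
Proof.
  intros Hdel Hv. unfold trunc_apply. rewrite <- lsum_scal. apply lsum_le; intros t Ht.
  apply in_seq in Ht. rewrite <- fsum_scal. apply fsum_le; intros y Hy.
  assert (0 <= K t * mpow d Q t x y * exp (g y) * v y)
    by (apply Rmult_le_pos; [apply kernel_nonneg; auto; lia | auto]).
  assert (exp (- (del * INR T)) * exp (- b * INR t) <= exp (- (b + del) * INR t)).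
  { rewrite <- exp_plus. apply exp_le. assert (INR t <= INR T) by (apply le_INR; lia). nra. }
  replace (exp (- (del * INR T)) * (K t * mpow d Q t x y * exp (g y) * exp (- b * INR t) * v y))
    with ((K t * mpow d Q t x y * exp (g y) * v y) * (exp (- (del * INR T)) * exp (- b * INR t)))
    by ring.
  replace (K t * mpow d Q t x y * exp (g y) * exp (- (b + del) * INR t) * v y)
    with ((K t * mpow d Q t x y * exp (g y) * v y) * exp (- (b + del) * INR t)) by ring.
  apply Rmult_le_compat_l; auto.
Qed.

Variable lam : R -> R.
Hypothesis HPF : forall b, 0 <= b -> PF_eigenvalue K d Q f b beta h (lam b).

Lemma lam_pos b : 0 <= b -> 0 < lam b.
Proof. intros Hb; apply HPF; auto. Qed.

(* Collatz-Wielandt: the eigenvector at [b1] is a supersolution for [A(b2)], since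
   [A(b2) <= exp (b1 - b2) A(b1)] entrywise. *)
Lemma lam_decay b1 b2 : 0 <= b1 -> b1 <= b2 -> lam b2 <= exp (- (b2 - b1)) * lam b1.
Proof.
  intros H1 H2. destruct (HPF b1 H1) as [_ [A1 [v1 [HA1 [Hv1 He1]]]]].
  destruct (HPF b2 ltac:(lra)) as [_ [A2 [v2 [HA2 [Hv2 He2]]]]].
  apply (eigenvalue_le_of_supersolution d A2 v2 v1); auto.
  - intros; eapply A_entry_nonneg; eauto.
  - intros x Hx. rewrite Rmult_assoc, <- He1, <- fsum_scal by auto.
    apply fsum_le; intros y Hy. rewrite <- Rmult_assoc.
    apply Rmult_le_compat_r; [apply Rlt_le; auto|].
    apply (infinite_sum_le (A_term b2 x y) (fun n => exp (- (b2 - b1)) * A_term b1 x y n));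
      [| apply HA2; auto | apply infinite_sum_scal, HA1; auto].
    intros n. unfold A_term.
    assert (0 <= K (S n) * mpow d Q (S n) x y * exp (beta * f y + h))
      by (apply (kernel_nonneg K d Q g); auto; lia).
    assert (1 <= INR (S n)) by (rewrite S_INR; pose proof (pos_INR n); lra).
    assert (exp (- b2 * INR (S n)) <= exp (- (b2 - b1)) * exp (- b1 * INR (S n)))
      by (rewrite <- exp_plus; apply exp_le; nra).
    set (c := K (S n) * mpow d Q (S n) x y * exp (beta * f y + h)) in *. nra.
Qed.

Lemma lam_strict_decr b1 b2 : 0 <= b1 -> b1 < b2 -> lam b2 < lam b1.
Proof.
  intros H1 H2. pose proof (lam_decay b1 b2 H1 ltac:(lra)). pose proof (lam_pos b1 H1).
  assert (exp (- (b2 - b1)) < 1) by (rewrite <- exp_0; apply exp_increasing; lra). nra.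
Qed.

Lemma lam_gt_1_bound b : 0 <= b -> 1 < lam b -> b < lam 0.
Proof.
  intros Hb Hl. pose proof (lam_decay 0 b ltac:(lra) Hb) as Hdec.
  rewrite Rminus_0_r, exp_Ropp in Hdec. pose proof (exp_ineq1_le b). pose proof (exp_pos b).
  assert (exp b < lam 0); [|lra].
  apply Rmult_lt_reg_l with (/ exp b); [apply Rinv_0_lt_compat; auto|].
  rewrite Rinv_l by lra. lra.
Qed.

(* The truncations of [A(b) v] increase to [lam b * v], so any [rho < lam b] is beaten by
   a finite truncation. *)
Lemma trunc_eigvec_lower b rho : 0 <= b -> rho < lam b ->
  exists v T, (1 <= T)%nat /\ (forall x, (x < d)%nat -> 0 < v x) /\
    (forall x, (x < d)%nat -> rho * v x <= trunc_apply K d Q g b T x v).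
Proof.
  intros Hb Hrho. destruct (HPF b Hb) as [_ [A [v [HA [Hv He]]]]].
  destruct (eventually_forall_fin d (fun x n => rho * v x <= trunc_apply K d Q g b (S n) x v))
    as [N HN].
  { intros x Hx. assert (Hc := trunc_apply_cv b x v A (fun y Hy => HA x y Hx Hy)).
    rewrite He in Hc by auto. assert (Hvx := Hv x Hx).
    destruct (Hc ((lam b - rho) * v x)) as [N HN]; [apply Rmult_lt_0_compat; lra|].
    exists N; intros n Hn. specialize (HN n Hn). unfold Rdist in HN. apply Rabs_def2 in HN. nra. }
  exists v, (S N); split; [lia|]; split; [auto|]. intros x Hx; apply HN; auto.
Qed.

Lemma trunc_eigvec_upper b : 0 <= b -> lam b <= 1 ->
  exists v, (forall x, (x < d)%nat -> 0 < v x) /\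
    forall x T, (x < d)%nat -> trunc_apply K d Q g b T x v <= v x.
Proof.
  intros Hb Hl. destruct (HPF b Hb) as [_ [A [v [HA [Hv He]]]]].
  exists v; split; auto. intros x T Hx.
  eapply Rle_trans; [apply (trunc_apply_le_A b T x v A); auto; intros; apply Rlt_le; auto|].
  rewrite He by auto. specialize (Hv x Hx). nra.
Qed.

(* Only the first [T] terms of [A(b)] are needed to beat [rho], and moving [b] to [b + del]
   costs at most a factor [exp (- del T)] on them. *)
Lemma lam_gt_1_right b : 0 <= b -> 1 < lam b -> exists b', b < b' /\ 1 < lam b'.
Proof.
  intros Hb Hl. set (rho := (1 + lam b) / 2).
  destruct (trunc_eigvec_lower b rho Hb ltac:(unfold rho; lra)) as [v [T [HT [Hv Hsub]]]].
  assert (HTpos : 0 < INR T) by (apply lt_0_INR; lia).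
  assert (Hlr : 0 < ln rho) by (rewrite <- ln_1; apply ln_increasing; unfold rho; lra).
  set (del := ln rho / (2 * INR T)).
  assert (Hdel : 0 < del) by (apply Rdiv_lt_0_compat; lra).
  exists (b + del); split; [lra|].
  destruct (HPF (b + del) ltac:(lra)) as [_ [A [w [HA [Hw He]]]]].
  apply Rlt_le_trans with (exp (- (del * INR T)) * rho).
  - replace (del * INR T) with (ln rho / 2) by (unfold del; field; lra).
    replace rho with (exp (ln rho)) at 2 by (apply exp_ln; unfold rho; lra).
    rewrite <- exp_plus, <- exp_0. apply exp_increasing. lra.
  - apply (eigenvalue_ge_of_subsolution d A w v); auto.
    + intros; eapply A_entry_nonneg; eauto.
    + intros x Hx.
      eapply Rle_trans; [|apply (trunc_apply_le_A (b + del) T); auto; intros; apply Rlt_le; auto].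
      eapply Rle_trans; [|apply trunc_apply_shift; [lra | intros; apply Rlt_le; auto]].
      rewrite Rmult_assoc. apply Rmult_le_compat_l; [apply Rlt_le, exp_pos | auto].
Qed.

Hypothesis HK1 : infinite_sum (fun n => K (S n)) 1.

(* The normalisation [sum K = 1] makes this bound uniform in the entry. *)
Lemma A_entry_le_shift F b x y ab aF : 0 < F -> F / 2 <= b -> b <= F ->
  (x < d)%nat -> (y < d)%nat ->
  A_entry K d Q f b beta h x y ab -> A_entry K d Q f F beta h x y aF ->
  ab <= aF + (F - b) * (2 / F) * exp (g y).
Proof.
  intros HF H1 H2 Hx Hy Hb HFe.
  set (c := (F - b) * (2 / F) * exp (g y)).
  assert (ab - aF <= c * 1); [|lra].
  apply (infinite_sum_le (fun n => A_term b x y n - A_term F x y n) (fun n => c * K (S n)));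
    [| apply (infinite_sum_minus _ _ _ _ Hb HFe) | apply infinite_sum_scal, HK1].
  intros n. unfold A_term. assert (HKn : 0 < K (S n)) by (apply HK; lia).
  assert (0 <= mpow d Q (S n) x y <= 1) by (split; [apply mpow_nonneg | apply mpow_le_1]; auto).
  pose proof (exp_diff_le F b (INR (S n)) HF H1 H2 (pos_INR _)).
  pose proof (exp_pos (g y)). unfold c, g in *.
  set (e := exp (- b * INR (S n)) - exp (- F * INR (S n))) in *.
  assert (0 <= (F - b) * (2 / F)) by (apply Rmult_le_pos; [|apply Rlt_le, Rdiv_lt_0_compat]; lra).
  replace (K (S n) * mpow d Q (S n) x y * exp (beta * f y + h) * exp (- b * INR (S n)) -
           K (S n) * mpow d Q (S n) x y * exp (beta * f y + h) * exp (- F * INR (S n)))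
    with (K (S n) * exp (beta * f y + h) * (mpow d Q (S n) x y * e)) by (unfold e; ring).
  replace ((F - b) * (2 / F) * exp (beta * f y + h) * K (S n))
    with (K (S n) * exp (beta * f y + h) * ((F - b) * (2 / F))) by ring.
  apply Rmult_le_compat_l; [apply Rmult_le_pos; lra|]. nra.
Qed.

Lemma lam_left_bound F : 0 < F ->
  exists C, 0 <= C /\ forall b, F / 2 <= b <= F -> lam b <= lam F + C * (F - b).
Proof.
  intros HF. destruct (HPF F ltac:(lra)) as [_ [AF [w [HAF [Hw HeF]]]]].
  destruct (exists_argmin d w Hd) as [i0 [Hi0 Hmin]]. assert (Hwi := Hw i0 Hi0).
  set (S := fsum d (fun y => exp (g y) * w y)).
  assert (HS : 0 <= S)
    by (apply fsum_nonneg; intros; apply Rmult_le_pos; apply Rlt_le; [apply exp_pos | auto]).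
  exists (2 / F * S / w i0); split.
  { apply Rmult_le_pos; [apply Rmult_le_pos; [apply Rlt_le, Rdiv_lt_0_compat|]; lra|].
    apply Rlt_le, Rinv_0_lt_compat; auto. }
  intros b [H1 H2]. destruct (HPF b ltac:(lra)) as [_ [Ab [vb [HAb [Hvb Heb]]]]].
  apply (eigenvalue_le_of_supersolution d Ab vb w); auto.
  - intros; eapply A_entry_nonneg; eauto.
  - intros x Hx. eapply Rle_trans.
    + apply fsum_le with (g2 := fun y => (AF x y + (F - b) * (2 / F) * exp (g y)) * w y).
      intros y Hy. apply Rmult_le_compat_r; [apply Rlt_le; auto|].
      apply (A_entry_le_shift F b x y); auto.
    + rewrite (fsum_ext _ _ (fun y => AF x y * w y + (F - b) * (2 / F) * (exp (g y) * w y)))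
        by (intros; ring).
      rewrite fsum_plus, fsum_scal, HeF by auto. fold S.
      assert (Hwx : w i0 <= w x) by auto.
      assert (0 <= (F - b) * (2 / F) * S)
        by (apply Rmult_le_pos; [apply Rmult_le_pos; [|apply Rlt_le, Rdiv_lt_0_compat]|]; lra).
      replace ((lam F + 2 / F * S / w i0 * (F - b)) * w x)
        with (lam F * w x + (F - b) * (2 / F) * S * (w x / w i0)) by (field; lra).
      assert (1 <= w x / w i0)
        by (apply Rmult_le_reg_r with (w i0); auto; field_simplify; lra).
      nra.
Qed.

Lemma lam_lt_1_left F : 0 < F -> lam F < 1 -> exists b, 0 <= b < F /\ lam b < 1.
Proof.
  intros HF Hl. destruct (lam_left_bound F HF) as [C [HC Hbound]].
  set (eta := Rmin (F / 2) ((1 - lam F) / (2 * (C + 1)))).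
  assert (Heta : 0 < eta) by (apply Rmin_pos; [|apply Rdiv_lt_0_compat]; lra).
  assert (Heta1 : eta <= F / 2) by apply Rmin_l.
  assert (Heta2 : eta * (2 * (C + 1)) <= 1 - lam F).
  { pose proof (Rmin_r (F / 2) ((1 - lam F) / (2 * (C + 1)))) as Hr. fold eta in Hr.
    apply Rmult_le_compat_r with (r := 2 * (C + 1)) in Hr; [|lra].
    unfold Rdiv in Hr. rewrite Rmult_assoc, Rinv_l, Rmult_1_r in Hr by lra. lra. }
  exists (F - eta); split; [lra|].
  pose proof (Hbound (F - eta) ltac:(lra)). replace (F - (F - eta)) with eta in H by ring. nra.
Qed.
End Eigenvalue.

Lemma PF_eigenvalue_shift_h K d Q f beta h b l1 l0 :
  stochastic d Q -> (forall t, (1 <= t)%nat -> 0 < K t) -> (0 < d)%nat ->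
  PF_eigenvalue K d Q f b beta h l1 -> PF_eigenvalue K d Q f b beta 0 l0 -> l1 = exp h * l0.
Proof.
  intros HQ HK Hd [_ [A1 [v1 [HA1 [Hv1 He1]]]]] [_ [A0 [v0 [HA0 [Hv0 He0]]]]].
  assert (HA : forall x y, (x < d)%nat -> (y < d)%nat -> A1 x y = exp h * A0 x y).
  { intros x y Hx Hy. apply (uniqueness_sum (A_term K d Q f beta h b x y)); [apply HA1; auto|].
    assert (H := infinite_sum_scal _ _ (exp h) (HA0 x y Hx Hy)).
    intros e He; destruct (H e He) as [N HN]; exists N; intros n Hn.
    rewrite (sum_eq _ (fun k => exp h * (K (S k) * mpow d Q (S k) x y * exp (beta * f y + 0)
                                        * exp (- b * INR (S k))))); [apply HN; auto|].
    intros k _. unfold A_term. rewrite Rplus_0_r, exp_plus. ring. }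
  assert (Heq : forall x, (x < d)%nat -> fsum d (fun y => A1 x y * v0 y) = exp h * l0 * v0 x).
  { intros x Hx. rewrite (fsum_ext _ _ (fun y => exp h * (A0 x y * v0 y))),
      fsum_scal, He0 by (auto; intros; rewrite HA by auto; ring). ring. }
  assert (HA1nn : forall x y, (x < d)%nat -> (y < d)%nat -> 0 <= A1 x y)
    by (intros; eapply A_entry_nonneg; eauto).
  apply Rle_antisym.
  - apply (eigenvalue_le_of_supersolution d A1 v1 v0); auto. intros; right; auto.
  - apply (eigenvalue_ge_of_subsolution d A1 v1 v0); auto. intros; right; symmetry; auto.
Qed.

Lemma half_floor_spec n : (2 <= n)%nat ->
  let m := Z.to_nat (Int_part (/ 2 * INR n)) in (1 <= m)%nat /\ 2 * INR m <= INR n.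
Proof.
  intros Hn m. destruct (base_Int_part (/ 2 * INR n)) as [H1 H2].
  assert (H2n : 2 <= INR n) by (apply (le_INR 2); auto).
  assert (Hz : (0 < Int_part (/ 2 * INR n))%Z) by (apply lt_IZR; simpl; lra).
  assert (INR m = IZR (Int_part (/ 2 * INR n)))
    by (unfold m; rewrite INR_IZR_INZ, Z2Nat.id; auto; lia).
  split; [unfold m; lia | lra].
Qed.

(* Halving: [L (n / 2) <= 2 L n] for large [n], so the bound [c / n] propagates from the
   finitely many small [n] by strong induction. *)
Lemma slowly_varying_lower_bound L : (forall n, 0 < L n) -> slowly_varying L ->
  exists c, 0 < c /\ forall n, (1 <= n)%nat -> c / INR n <= L n.
Proof.
  intros HL Hsv. destruct (Hsv (/ 2) ltac:(lra) 1 ltac:(lra)) as [n0 Hn0].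
  set (n1 := max n0 2).
  destruct (exists_lower_bound_fin n1 1 (fun N _ => L N)) as [c [Hc Hle]]; auto.
  exists c; split; auto.
  intro n. induction n as [n IH] using (well_founded_induction lt_wf). intros Hn.
  assert (HnR : 1 <= INR n) by (apply (le_INR 1); auto).
  destruct (Nat.lt_ge_cases n n1).
  - specialize (Hle n 0%nat H ltac:(lia)).
    assert (/ INR n <= 1) by (rewrite <- Rinv_1; apply Rinv_le_contravar; lra).
    unfold Rdiv. nra.
  - destruct (half_floor_spec n ltac:(lia)) as [Hm1 Hm2].
    set (m := Z.to_nat (Int_part (/ 2 * INR n))) in *.
    assert (HmR : 1 <= INR m) by (apply (le_INR 1); auto).
    assert (Hmn : (m < n)%nat) by (apply INR_lt; lra).
    specialize (IH m Hmn Hm1). specialize (Hn0 n ltac:(lia)).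
    unfold Rdist in Hn0. apply Rabs_def2 in Hn0. fold m in Hn0. destruct Hn0 as [Hratio _].
    assert (HLn := HL n).
    assert (L m < 2 * L n).
    { apply Rmult_lt_compat_r with (r := L n) in Hratio; auto.
      unfold Rdiv in Hratio. rewrite Rmult_minus_distr_r, Rmult_assoc, Rinv_l in Hratio by lra.
      lra. }
    apply Rle_trans with (c / (2 * INR m)).
    + unfold Rdiv. apply Rmult_le_compat_l; [lra|]. apply Rinv_le_contravar; lra.
    + unfold Rdiv in *. rewrite Rinv_mult. lra.
Qed.

Lemma Rpower_opp_ge_inv_pow x a k : 1 <= x -> a <= INR k -> / x ^ k <= Rpower x (- a).
Proof.
  intros Hx Ha. rewrite Rpower_Ropp, <- Rpower_pow by lra.
  apply Rinv_le_contravar; [apply exp_pos | apply Rle_Rpower; lra].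
Qed.

Lemma exp_INR_mult m x : exp (INR m * x) = exp x ^ m.
Proof.
  induction m; [simpl; rewrite Rmult_0_l, exp_0; reflexivity|].
  rewrite S_INR, Rmult_plus_distr_r, exp_plus, IHm, Rmult_1_l. simpl. ring.
Qed.

Lemma pow_le_exp x k : 0 <= x -> (x / INR (S k)) ^ S k <= exp x.
Proof.
  intros Hx. assert (Hk : 0 < INR (S k)) by (apply lt_0_INR; lia).
  replace x with (INR (S k) * (x / INR (S k))) at 2 by (field; lra).
  rewrite exp_INR_mult. apply pow_incr.
  split; [apply Rmult_le_pos; [|apply Rlt_le, Rinv_0_lt_compat]; lra|].
  pose proof (exp_ineq1_le (x / INR (S k))). lra.
Qed.

Lemma K_subexponential alpha L K : 0 <= alpha -> (forall n, 0 < L n) -> slowly_varying L ->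
  (forall n, (1 <= n)%nat -> K n = L n * Rpower (INR n) (- (1 + alpha))) ->
  forall eps B, 0 < eps -> exists T, (1 <= T)%nat /\ B <= K T * exp (eps * INR T).
Proof.
  intros Ha HL Hsv HKL eps B He.
  destruct (slowly_varying_lower_bound L HL Hsv) as [m0 [Hm0 HLlow]].
  destruct (INR_archimed 1 (1 + alpha) ltac:(lra)) as [k Hk]. rewrite Rmult_1_r in Hk.
  set (c := (eps / INR (S (S k))) ^ S (S k)).
  assert (Hc : 0 < c) by (apply pow_lt, Rdiv_lt_0_compat; [|apply lt_0_INR]; lra || lia).
  destruct (INR_archimed (m0 * c) (Rmax B 0)) as [T0 HT0]; [apply Rmult_lt_0_compat; auto|].
  exists (S T0); split; [lia|]. set (T := S T0).
  assert (HT1 : 1 <= INR T) by (apply (le_INR 1); unfold T; lia).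
  assert (HTT0 : INR T0 <= INR T) by (apply le_INR; unfold T; lia).
  assert (HKT : m0 / INR T * / INR T ^ k <= K T).
  { rewrite HKL by (unfold T; lia). apply Rmult_le_compat.
    - apply Rlt_le, Rdiv_lt_0_compat; lra.
    - apply Rlt_le, Rinv_0_lt_compat, pow_lt; lra.
    - apply HLlow; unfold T; lia.
    - apply Rpower_opp_ge_inv_pow; lra. }
  assert (HexpT : c * INR T ^ S (S k) <= exp (eps * INR T)).
  { unfold c. rewrite <- Rpow_mult_distr.
    replace (eps / INR (S (S k)) * INR T) with (eps * INR T / INR (S (S k)))
      by (field; apply not_0_INR; lia).
    apply pow_le_exp. nra. }
  assert (Hprod : m0 / INR T * / INR T ^ k * (c * INR T ^ S (S k)) = m0 * c * INR T).
  { assert (INR T ^ k <> 0) by (apply pow_nonzero; lra).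
    replace (INR T ^ S (S k)) with (INR T * INR T * INR T ^ k) by (simpl; ring).
    field. split; lra. }
  assert (0 <= m0 / INR T * / INR T ^ k)
    by (apply Rmult_le_pos; [apply Rlt_le, Rdiv_lt_0_compat | apply Rlt_le, Rinv_0_lt_compat,
          pow_lt]; lra).
  assert (0 <= c * INR T ^ S (S k)) by (apply Rmult_le_pos; [lra | apply pow_le; lra]).
  pose proof (Rmax_l B 0). assert (0 < m0 * c) by (apply Rmult_lt_0_compat; auto).
  assert (m0 / INR T * / INR T ^ k * (c * INR T ^ S (S k)) <= K T * exp (eps * INR T))
    by (apply Rmult_le_compat; auto).
  nra.
Qed.

Lemma Un_cv_of_eventual_bounds (u : nat -> R) F :
  (forall b, b < F -> exists N0, forall N, (N0 <= N)%nat -> b <= u N) ->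
  (forall b, F < b -> exists N0, forall N, (N0 <= N)%nat -> u N <= b) -> Un_cv u F.
Proof.
  intros Hlow Hup e He.
  destruct (Hlow (F - e / 2) ltac:(lra)) as [N1 H1].
  destruct (Hup (F + e / 2) ltac:(lra)) as [N2 H2].
  exists (max N1 N2). intros N HN.
  specialize (H1 N ltac:(lia)). specialize (H2 N ltac:(lia)).
  unfold Rdist. apply Rabs_def1; lra.
Qed.

Lemma ln_div_lower_of_exp_lower (Z : nat -> R) b c : 0 < c ->
  (forall N, c * exp (b * INR N) <= Z N) ->
  forall b', b' < b -> exists N0, forall N, (N0 <= N)%nat -> b' <= ln (Z N) / INR N.
Proof.
  intros Hc HZ b' Hb'. destruct (INR_archimed (b - b') (Rabs (ln c))) as [N0 HN0]; [lra|].
  exists (S N0). intros N HN. assert (HNR : INR (S N0) <= INR N) by (apply le_INR; lia).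
  rewrite S_INR in HNR. pose proof (pos_INR N0).
  assert (Hpos : 0 < c * exp (b * INR N)) by (apply Rmult_lt_0_compat; [|apply exp_pos]; auto).
  assert (Hln : ln (c * exp (b * INR N)) <= ln (Z N)).
  { destruct (Rle_lt_or_eq_dec _ _ (HZ N)) as [Hlt | ->]; [apply Rlt_le, ln_increasing|]; lra. }
  rewrite ln_mult, ln_exp in Hln by (auto; apply exp_pos).
  apply Rmult_le_reg_r with (INR N); [lra|].
  unfold Rdiv. rewrite Rmult_assoc, Rinv_l, Rmult_1_r by lra.
  pose proof (Rle_abs (- ln c)). rewrite Rabs_Ropp in *. nra.
Qed.

Lemma ln_div_upper_of_exp_upper (Z : nat -> R) b C : 0 < C -> (forall N, 0 < Z N) ->
  (forall N, Z N <= C * exp (b * INR N)) ->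
  forall b', b < b' -> exists N0, forall N, (N0 <= N)%nat -> ln (Z N) / INR N <= b'.
Proof.
  intros HC HZpos HZ b' Hb'. destruct (INR_archimed (b' - b) (Rabs (ln C))) as [N0 HN0]; [lra|].
  exists (S N0). intros N HN. assert (HNR : INR (S N0) <= INR N) by (apply le_INR; lia).
  rewrite S_INR in HNR. pose proof (pos_INR N0).
  assert (Hln : ln (Z N) <= ln (C * exp (b * INR N))).
  { destruct (Rle_lt_or_eq_dec _ _ (HZ N)) as [Hlt | ->];
      [apply Rlt_le, ln_increasing|]; auto; lra. }
  rewrite ln_mult, ln_exp in Hln by (auto; apply exp_pos).
  apply Rmult_le_reg_r with (INR N); [lra|].
  unfold Rdiv. rewrite Rmult_assoc, Rinv_l, Rmult_1_r by lra.
  pose proof (Rle_abs (ln C)). nra.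
Qed.

Lemma decreasing_threshold (lam : R -> R) M :
  (forall b1 b2, 0 <= b1 -> b1 < b2 -> lam b2 < lam b1) ->
  (forall b, 0 <= b -> 1 < lam b -> b < M) ->
  exists F, 0 <= F /\ (forall b, 0 <= b < F -> 1 < lam b) /\ (forall b, F < b -> lam b <= 1).
Proof.
  intros Hdecr Hbound.
  set (E := fun b => b = 0 \/ (0 <= b /\ 1 < lam b)).
  destruct (completeness E) as [F [Hub Hleast]].
  { exists (Rmax M 0). intros b [->|[Hb Hl]]; [apply Rmax_r|].
    pose proof (Hbound b Hb Hl). pose proof (Rmax_l M 0). lra. }
  { exists 0. left; auto. }
  assert (HF0 : 0 <= F) by (apply Hub; left; auto).
  exists F; split; [auto|split].
  - intros b Hb. destruct (Rlt_le_dec 1 (lam b)) as [|Hle]; auto. exfalso.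
    assert (F <= b); [|lra]. apply Hleast. intros e [->|[He Hle']]; [lra|].
    destruct (Rle_lt_dec e b); auto. pose proof (Hdecr b e ltac:(lra) ltac:(lra)). lra.
  - intros b Hb. destruct (Rle_lt_dec (lam b) 1); auto. exfalso.
    assert (b <= F) by (apply Hub; right; split; lra). lra.
Qed.

Lemma critical_point_lub (Fa : R -> R) l0 : 0 < l0 ->
  (forall h, Fa h = 0 <-> exp h * l0 <= 1) -> is_lub (fun h => Fa h = 0) (- ln l0).
Proof.
  intros Hl0 Hiff.
  assert (Hcrit : forall h, Fa h = 0 <-> h <= - ln l0).
  { intros h. rewrite Hiff.
    replace (exp h * l0) with (exp (h + ln l0)) by (rewrite exp_plus, exp_ln; auto).
    split; intros H.
    - destruct (Rle_lt_dec h (- ln l0)); auto. exfalso.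
      assert (exp 0 < exp (h + ln l0)) by (apply exp_increasing; lra). rewrite exp_0 in *. lra.
    - rewrite <- exp_0. apply exp_le. lra. }
  split.
  - intros h Hh. apply Hcrit; auto.
  - intros m Hm. apply Hm, Hcrit. lra.
Qed.

Section FreeEnergy.
Variable K : nat -> R.
Variable d : nat.
Variable Q : nat -> nat -> R.
Variables mu0 f : nat -> R.
Variables beta h : R.
Hypothesis HQ : stochastic d Q.
Hypothesis HK : forall t, (1 <= t)%nat -> 0 < K t.
Hypothesis HK1 : infinite_sum (fun n => K (S n)) 1.
Hypothesis Hd : (0 < d)%nat.
Hypothesis Hmu0 : (forall x, (x < d)%nat -> 0 <= mu0 x) /\ fsum d mu0 = 1.
Hypothesis HKsubexp :
  forall eps B, 0 < eps -> exists T, (1 <= T)%nat /\ B <= K T * exp (eps * INR T).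
Variable lam : R -> R.
Hypothesis HPF : forall b, 0 <= b -> PF_eigenvalue K d Q f b beta h (lam b).
Let g := fun y => beta * f y + h.
Let Z := annealedZ K d Q mu0 f beta h.

Lemma annealedZ_ge N a :
  (forall x, (x < d)%nat -> a <= renewal_sum K d Q g N x) -> a <= Z N.
Proof.
  intros Ha. destruct Hmu0 as [Hmu Hsum].
  unfold Z. rewrite annealedZ_renewal_sum by auto. fold g.
  rewrite <- (Rmult_1_r a), <- Hsum, <- fsum_scal.
  apply fsum_le; intros x Hx. specialize (Ha x Hx). specialize (Hmu x Hx). nra.
Qed.

Lemma annealedZ_le N c :
  (forall x, (x < d)%nat -> renewal_sum K d Q g N x <= c) -> Z N <= c.
Proof.
  intros Hc. destruct Hmu0 as [Hmu Hsum].
  unfold Z. rewrite annealedZ_renewal_sum by auto. fold g.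
  rewrite <- (Rmult_1_r c), <- Hsum, <- fsum_scal.
  apply fsum_le; intros x Hx. specialize (Hc x Hx). specialize (Hmu x Hx). nra.
Qed.

Lemma annealedZ_pos N : 0 < Z N.
Proof.
  destruct (exists_argmin d (fun x => renewal_sum K d Q g N x) Hd) as [i [Hi Hmin]].
  eapply Rlt_le_trans; [apply (renewal_sum_pos K d Q g HQ HK N i Hi)|].
  apply annealedZ_ge. auto.
Qed.

Lemma annealedZ_exp_lower b v T : (forall x, (x < d)%nat -> 0 < v x) ->
  (forall x, (x < d)%nat -> v x <= trunc_apply K d Q g b T x v) ->
  exists c, 0 < c /\ forall N, c * exp (b * INR N) <= Z N.
Proof.
  intros Hv Hsub. destruct (renewal_sum_lower K d Q g HQ HK b v T Hv Hsub) as [c [Hc Hlow]].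
  destruct (exists_argmin d v Hd) as [i [Hi Hmin]].
  exists (c * v i); split; [apply Rmult_lt_0_compat; auto|].
  intros N. apply annealedZ_ge. intros x Hx. eapply Rle_trans; [|apply Hlow; auto].
  pose proof (Hmin x Hx). pose proof (exp_pos (b * INR N)).
  assert (0 < c * exp (b * INR N)) by (apply Rmult_lt_0_compat; auto). nra.
Qed.

Lemma annealedZ_exp_upper b v : (forall x, (x < d)%nat -> 0 < v x) ->
  (forall x T, (x < d)%nat -> trunc_apply K d Q g b T x v <= v x) ->
  exists C, 0 < C /\ forall N, Z N <= C * exp (b * INR N).
Proof.
  intros Hv Hsuper. destruct (renewal_sum_upper K d Q g HQ HK b v Hd Hv Hsuper) as [C [HC Hup]].
  destruct (exists_argmax d v Hd) as [i [Hi Hmax]].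
  exists (C * v i); split; [apply Rmult_lt_0_compat; auto|].
  intros N. apply annealedZ_le. intros x Hx. eapply Rle_trans; [apply Hup; auto|].
  pose proof (Hmax x Hx). pose proof (exp_pos (b * INR N)).
  assert (0 < C * exp (b * INR N)) by (apply Rmult_lt_0_compat; auto). nra.
Qed.

(* A single long renewal interval of length [T] already beats [exp (b T)] when [b < 0],
   because [K] decays subexponentially. *)
Lemma annealedZ_exp_lower_neg b : b < 0 -> exists c, 0 < c /\ forall N, c * exp (b * INR N) <= Z N.
Proof.
  intros Hb. destruct (exists_argmin d g Hd) as [j [Hj Hmin]].
  destruct (HKsubexp (- b) (exp (- g j)) ltac:(lra)) as [T [HT HKT]].
  apply (annealedZ_exp_lower b (fun _ => 1) T); [intros; lra|].
  intros x Hx. unfold trunc_apply.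
  replace (seq 1 T) with (seq 1 (pred T) ++ [T])
    by (destruct T as [|T']; [lia|]; rewrite (seq_S T' 1); reflexivity).
  rewrite lsum_app.
  set (term := fun t =>
         fsum d (fun y => K t * mpow d Q t x y * exp (g y) * exp (- b * INR t) * 1)).
  assert (0 <= lsum (seq 1 (pred T)) term).
  { apply lsum_nonneg; intros t Ht. apply in_seq in Ht. apply fsum_nonneg; intros y Hy.
    rewrite Rmult_1_r.
    apply Rmult_le_pos; [apply kernel_nonneg; auto; lia | apply Rlt_le, exp_pos]. }
  enough (1 <= term T) by (unfold lsum at 2; simpl; lra).
  apply Rle_trans with (K T * exp (- b * INR T) * exp (g j) * fsum d (fun y => mpow d Q T x y)).
  - rewrite mpow_rowsum, Rmult_1_r by auto.
    apply Rmult_le_reg_r with (exp (- g j)); [apply exp_pos|].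
    rewrite Rmult_assoc, <- exp_plus, Rplus_opp_r, exp_0. lra.
  - unfold term. rewrite <- fsum_scal. apply fsum_le; intros y Hy.
    pose proof (mpow_nonneg d Q HQ T x y Hy). pose proof (exp_le _ _ (Hmin y Hy)).
    assert (0 <= K T * exp (- b * INR T))
      by (apply Rmult_le_pos; [apply Rlt_le, HK; auto | apply Rlt_le, exp_pos]).
    assert (0 <= K T * exp (- b * INR T) * mpow d Q T x y) by (apply Rmult_le_pos; auto).
    nra.
Qed.
Lemma free_energy_threshold : exists F, 0 <= F /\
  (forall b, 0 <= b < F -> 1 < lam b) /\ (forall b, F < b -> lam b <= 1).
Proof.
  apply (decreasing_threshold lam (lam 0)).
  - exact (lam_strict_decr K d Q f beta h HQ HK Hd lam HPF).
  - exact (lam_gt_1_bound K d Q f beta h HQ HK Hd lam HPF).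
Qed.

Section Threshold.
Variable F : R.
Hypothesis HF0 : 0 <= F.
Hypothesis Hbelow : forall b, 0 <= b < F -> 1 < lam b.
Hypothesis Habove : forall b, F < b -> lam b <= 1.

Lemma ln_annealedZ_cv : Un_cv (fun N => ln (Z N) / INR N) F.
Proof.
  apply Un_cv_of_eventual_bounds.
  - intros b Hb. destruct (Rlt_le_dec b 0) as [Hneg|Hnn].
    + set (b2 := b / 2).
      destruct (annealedZ_exp_lower_neg b2 ltac:(unfold b2; lra)) as [c [Hc Hlow]].
      apply (ln_div_lower_of_exp_lower Z b2 c Hc Hlow). unfold b2; lra.
    + set (b2 := (b + F) / 2).
      destruct (trunc_eigvec_lower K d Q f beta h Hd lam HPF b2 1 ltac:(unfold b2; lra)
                  (Hbelow b2 ltac:(unfold b2; lra))) as [v [T [_ [Hv Hsub]]]].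
      assert (Hsub' : forall x, (x < d)%nat -> v x <= trunc_apply K d Q g b2 T x v)
        by (intros x Hx; rewrite <- (Rmult_1_l (v x)); auto).
      destruct (annealedZ_exp_lower b2 v T Hv Hsub') as [c [Hc Hlow]].
      apply (ln_div_lower_of_exp_lower Z b2 c Hc Hlow). unfold b2; lra.
  - intros b Hb. set (b2 := (b + F) / 2).
    destruct (trunc_eigvec_upper K d Q f beta h HQ HK Hd lam HPF b2 ltac:(unfold b2; lra)
                (Habove b2 ltac:(unfold b2; lra))) as [v [Hv Hsuper]].
    destruct (annealedZ_exp_upper b2 v Hv Hsuper) as [C [HC Hup]].
    apply (ln_div_upper_of_exp_upper Z b2 C HC annealedZ_pos Hup). unfold b2; lra.
Qed.

Lemma threshold_root : 1 < lam 0 ->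
  0 < F /\ lam F = 1 /\ (forall b, 0 < b -> lam b = 1 -> b = F).
Proof.
  intros Hl0.
  assert (HFpos : 0 < F).
  { destruct (lam_gt_1_right K d Q f beta h HQ HK Hd lam HPF 0 ltac:(lra) Hl0) as [b [Hb Hlb]].
    destruct (Rlt_le_dec 0 F); auto. pose proof (Habove b ltac:(lra)). lra. }
  assert (HlF : lam F = 1).
  { destruct (Rtotal_order (lam F) 1) as [Hlt|[Heq|Hgt]]; auto.
    - destruct (lam_lt_1_left K d Q f beta h HQ HK Hd lam HPF HK1 F HFpos Hlt) as [b [Hb Hlb]].
      pose proof (Hbelow b Hb). lra.
    - destruct (lam_gt_1_right K d Q f beta h HQ HK Hd lam HPF F HF0 Hgt) as [b [Hb Hlb]].
      pose proof (Habove b Hb). lra. }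
  split; [auto | split; [auto|]]. intros b Hb Hlb.
  destruct (Rtotal_order b F) as [Hlt|[Heq|Hgt]]; auto.
  - pose proof (Hbelow b ltac:(lra)). lra.
  - pose proof (lam_strict_decr K d Q f beta h HQ HK Hd lam HPF F b HF0 Hgt). lra.
Qed.

Lemma threshold_zero : lam 0 <= 1 -> F = 0.
Proof.
  intros Hl0. destruct (Rle_lt_dec F 0); [lra|]. exfalso.
  pose proof (Hbelow (F / 2) ltac:(lra)).
  pose proof (lam_strict_decr K d Q f beta h HQ HK Hd lam HPF 0 (F / 2) ltac:(lra) ltac:(lra)).
  lra.
Qed.
End Threshold.

Lemma annealed_free_energy : exists F,
  Un_cv (fun N => ln (Z N) / INR N) F /\ 0 <= F /\
  (1 < lam 0 -> 0 < F /\ lam F = 1 /\ (forall b, 0 < b -> lam b = 1 -> b = F)) /\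
  (lam 0 <= 1 -> F = 0).
Proof.
  destruct free_energy_threshold as [F [HF0 [Hbelow Habove]]].
  exists F. split; [|split; [|split]].
  - exact (ln_annealedZ_cv F HF0 Hbelow Habove).
  - exact HF0.
  - exact (threshold_root F HF0 Hbelow Habove).
  - exact (threshold_zero F HF0 Hbelow).
Qed.
End FreeEnergy.

Lemma choice2_guarded (G : R -> Prop) (P : R -> R -> R -> Prop) :
  (forall x y, G x -> exists z, P x y z) -> exists F, forall x y, G x -> P x y (F x y).
Proof.
  intros H. destruct (choice (fun xy z => G (fst xy) -> P (fst xy) (snd xy) z)) as [F HF].
  - intros [x y]. destruct (excluded_middle_informative (G x)) as [Hx|Hx].
    + destruct (H x y Hx) as [z Hz]. exists z; auto.
    + exists 0. intros Hx'. contradiction.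
  - exists (fun x y => F (x, y)). intros x y Hx. exact (HF (x, y) Hx).
Qed.

Lemma critical_point_of_free_energy (Fa : R -> R) (lam0 : R -> R) :
  0 < lam0 0 -> (forall h, lam0 h = exp h * lam0 0) ->
  (forall h, 1 < lam0 h -> 0 < Fa h) -> (forall h, lam0 h <= 1 -> Fa h = 0) ->
  is_lub (fun h => Fa h = 0) (- ln (lam0 0)).
Proof.
  intros Hl0 Hshift Hpos Hzero. apply critical_point_lub; auto.
  intros h. rewrite <- Hshift. split; intros H.
  - destruct (Rle_lt_dec (lam0 h) 1) as [|Hlt]; auto. pose proof (Hpos h Hlt). lra.
  - auto.
Qed.

Theorem mainTheorem1 (alpha : R) (L K : nat -> R) (d : nat)
  (Q : nat -> nat -> R) (mu0 f : nat -> R) (lam : R -> R -> R -> R) :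
  0 <= alpha ->
  (forall n, 0 < L n) ->
  slowly_varying L ->
  (forall n, (1 <= n)%nat -> K n = L n * Rpower (INR n) (- (1 + alpha))) ->
  infinite_sum (fun n => K (S n)) 1 ->
  (0 < d)%nat ->
  stochastic d Q ->
  irreducible d Q ->
  invariant_distribution d Q mu0 ->
  fsum d (fun x => mu0 x * f x) = 0 ->
  (forall b beta h, 0 <= b -> 0 <= beta -> PF_eigenvalue K d Q f b beta h (lam b beta h)) ->
  exists Fa : R -> R -> R,
    (forall beta h, 0 <= beta ->
       Un_cv (fun N => ln (annealedZ K d Q mu0 f beta h N) / INR N) (Fa beta h) /\
       0 <= Fa beta h /\
       (1 < lam 0 beta h ->
          0 < Fa beta h /\ lam (Fa beta h) beta h = 1 /\
          (forall b, 0 < b -> lam b beta h = 1 -> b = Fa beta h)) /\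
       (lam 0 beta h <= 1 -> Fa beta h = 0)) /\
    (forall beta, 0 <= beta ->
       is_lub (fun h => Fa beta h = 0) (- ln (lam 0 beta 0))).
Proof.
  (* Irreducibility only serves to produce the Perron-Frobenius eigenvalues, which are
     given here. *)
  intros Halpha HL Hsv HKL HK1 Hd HQ _ [Hmu [Hmu1 _]] _ HPF.
  assert (HK : forall t, (1 <= t)%nat -> 0 < K t).
  { intros t Ht. rewrite HKL by auto. apply Rmult_lt_0_compat; [auto | apply exp_pos]. }
  pose proof (K_subexponential alpha L K Halpha HL Hsv HKL) as HKsubexp.
  destruct (choice2_guarded (fun beta => 0 <= beta) _
              (fun beta h Hbeta => annealed_free_energy K d Q mu0 f beta h HQ HK HK1 Hd
                 (conj Hmu Hmu1) HKsubexp (fun b => lam b beta h)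
                 (fun b Hb => HPF b beta h Hb Hbeta))) as [Fa HFa].
  exists Fa. split; [exact HFa|]. intros beta Hbeta.
  apply (critical_point_of_free_energy (Fa beta) (fun h => lam 0 beta h)).
  - apply HPF; lra.
  - intros h. apply (PF_eigenvalue_shift_h K d Q f beta h 0); auto; apply HPF; lra.
  - intros h Hl. apply (HFa beta h Hbeta); auto.
  - intros h Hl. apply (HFa beta h Hbeta); auto.
Qed.
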